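(* For a quasi-pseudometric space $(X,d)$ the following are equivalent, where for a function $\varphi:X\to\mathbb{R}\cup\{\infty\}$ and $x\in X$ we write $S(x)=\{y\in X:\varphi(y)+d(y,x)\le\varphi(x)\}$: 1. $(X,d)$ is sequentially right $K$-complete. 2. For every proper bounded below nearly lower semicontinuous function $\varphi:X\to\mathbb{R}\cup\{\infty\}$ there exists $z\in X$ such that $\varphi(x)=\varphi(z)$ for all $x\in S(z)$. 3. Every proper bounded below nearly lower semicontinuous function $\varphi:X\to\mathbb{R}\cup\{\infty\}$ such that for every $x\in X$ with $\varphi(x)>\inf\varphi(X)$ there exists $y\in S(x)$ with $\varphi(y)<\varphi(x)$, attains its minimum on $X$. 4. For every proper bounded below nearly lower semicontinuous function $\varphi:X\to\mathbb{R}\cup\{\infty\}$ and every mapping $T:X\to X$ with $Tx\in S(x)$ for all $x\in X$, there exists $z\in X$ with $\varphi(Tz)=\varphi(z)$.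
   Context: A quasi-pseudometric on $X$ is $d:X\times X\to[0,\infty)$ with $d(x,x)=0$ and $d(x,z)\le d(x,y)+d(y,z)$ (no symmetry). Topology $\tau_d$: neighbourhood base at $x$ given by $\{y:d(x,y)<r\}$, $r>0$; $x_n\to x$ iff $d(x,x_n)\to0$. A sequence $(x_n)$ is right $K$-Cauchy if for every $\varepsilon>0$ there is $n_\varepsilon$ with $d(x_{n+k},x_n)<\varepsilon$ for all $n\ge n_\varepsilon$, $k\in\mathbb{N}$; $X$ is sequentially right $K$-complete if every right $K$-Cauchy sequence converges. $\varphi$ is proper if finite somewhere; nearly lower semicontinuous if $\varphi(x)\le\liminf_n\varphi(x_n)$ for every sequence with pairwise distinct terms converging to $x$. *)

From HB Require Import structures.
From mathcomp Require Import all_boot all_order all_algebra.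
From mathcomp Require Import all_classical all_reals all_analysis.
From mathcomp Require Import Rstruct Rstruct_topology.
Set Implicit Arguments. Unset Strict Implicit. Unset Printing Implicit Defensive.
Import Order.TTheory GRing.Theory Num.Theory.
Local Open Scope classical_set_scope.
Local Open Scope ring_scope.

Notation Rl := Rdefinitions.R.

Definition quasi_pseudometric (X : Type) (d : X -> X -> Rl) : Prop :=
  (forall x y, 0 <= d x y) /\ (forall x, d x x = 0) /\
  (forall x y z, d x z <= d x y + d y z).

Definition qconv (X : Type) (d : X -> X -> Rl) (u : nat -> X) (x : X) : Prop :=
  (fun n => d x (u n)) @ \oo --> (0 : Rl).

Definition right_K_Cauchy (X : Type) (d : X -> X -> Rl) (u : nat -> X) : Prop :=
  forall eps : Rl, 0 < eps -> exists N : nat,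
    forall n k : nat, (N <= n)%N -> (0 < k)%N -> d (u (n + k)%N) (u n) < eps.

Definition seq_right_K_complete (X : Type) (d : X -> X -> Rl) : Prop :=
  forall u : nat -> X, right_K_Cauchy d u -> exists x, qconv d u x.

(* phi : X -> R U {+oo}, modelled as \bar R; "bounded below" forces phi <> -oo *)
Definition proper_fun (X : Type) (phi : X -> \bar Rl) : Prop :=
  exists x, phi x != +oo%E.

Definition bounded_below (X : Type) (phi : X -> \bar Rl) : Prop :=
  exists c : Rl, forall x, (c%:E <= phi x)%E.

Definition nearly_lsc (X : Type) (d : X -> X -> Rl) (phi : X -> \bar Rl) : Prop :=
  forall (u : nat -> X) (x : X), injective u -> qconv d u x ->
    (phi x <= limn_einf (fun n => phi (u n)))%E.

Definition Sset (X : Type) (d : X -> X -> Rl) (phi : X -> \bar Rl) (x : X) : set X :=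
  [set y | (phi y + (d y x)%:E <= phi x)%E].

Definition admissible (X : Type) (d : X -> X -> Rl) (phi : X -> \bar Rl) : Prop :=
  proper_fun phi /\ bounded_below phi /\ nearly_lsc d phi.

Definition cond2 (X : Type) (d : X -> X -> Rl) : Prop :=
  forall phi : X -> \bar Rl, admissible d phi ->
    exists z, forall x, Sset d phi z x -> phi x = phi z.

Definition cond3 (X : Type) (d : X -> X -> Rl) : Prop :=
  forall phi : X -> \bar Rl, admissible d phi ->
    (forall x, (ereal_inf (range phi) < phi x)%E ->
       exists2 y, Sset d phi x y & (phi y < phi x)%E) ->
    exists z, forall x, (phi z <= phi x)%E.

Definition cond4 (X : Type) (d : X -> X -> Rl) : Prop :=
  forall phi : X -> \bar Rl, admissible d phi ->
    forall T : X -> X, (forall x, Sset d phi x (T x)) ->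
    exists z, phi (T z) = phi z.

From mathcomp Require Import all_boot all_order all_algebra.
From mathcomp Require Import all_classical all_reals all_analysis.
From mathcomp Require Import Rstruct Rstruct_topology.
From mathcomp Require Import lra.
Set Implicit Arguments. Unset Strict Implicit. Unset Printing Implicit Defensive.
Import Order.TTheory GRing.Theory Num.Theory numFieldNormedType.Exports.
Local Open Scope classical_set_scope.
Local Open Scope ring_scope.

(* (1) => (2) is an Ekeland-type argument.  If (2) failed, then at every point x
   where phi is finite, phi x would lie strictly above the infimum of phi on S(x),
   so one can pick u (n+1) in S(u n) with phi below the midpoint of phi (u n) and
   that infimum.  The gap between the two then halves at every step; this makes u
   right K-Cauchy with phi strictly decreasing along it (hence injective, as near
   lower semicontinuity requires), and its limit z lies in every S(u n), which
   forces phi to be constant on S(z).  Since (2) clearly implies (3) and (4), it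
   remains to refute all three when some right K-Cauchy sequence has no limit: a
   subsequence w of it is injective, has no cluster point and satisfies
   d(w (n+1), w n) < 2^-(n+1), and the function equal to 2^-n at w n and to +oo
   elsewhere is then admissible, and every x has some y in S(x) with
   phi y < phi x. *)

Fixpoint subseq_idx (s0 : nat) (B : nat -> nat -> nat) (n : nat) : nat :=
  if n is n'.+1 then maxn (subseq_idx s0 B n').+1 (B n' (subseq_idx s0 B n'))
  else s0.

Section SubseqIndex.
Variables (s0 : nat) (B : nat -> nat -> nat).
Local Notation sigma := (subseq_idx s0 B).

Lemma subseq_idx_ltS n : (sigma n < sigma n.+1)%N.
Proof. by rewrite /= leq_max leqnn. Qed.

Lemma subseq_idx_bound n : (B n (sigma n) <= sigma n.+1)%N.
Proof. by rewrite /= leq_max leqnn orbT. Qed.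

Lemma subseq_idx_leq : {homo sigma : m n / (m <= n)%N}.
Proof. by apply: ltnW_homo; apply: homo_ltn ltn_trans subseq_idx_ltS. Qed.

Lemma subseq_idx_ge n : (n <= sigma n)%N.
Proof. by elim: n => // n IH; apply: leq_ltn_trans IH (subseq_idx_ltS n). Qed.

End SubseqIndex.

Lemma eventually_avoid_finite (T : Type) (u w : nat -> T) :
  (forall y, exists N, forall n, (N <= n)%N -> u n <> y) ->
  forall j, exists N, forall n, (N <= n)%N -> forall i, (i < j)%N -> u n <> w i.
Proof.
move=> avoid; elim=> [|j [N1 HN1]]; first by exists 0%N.
have [N2 HN2] := avoid (w j).
exists (maxn N1 N2) => n; rewrite geq_max => /andP[n1 n2] i.
by rewrite ltnS leq_eqVlt => /orP[/eqP ->|ij]; [exact: HN2|exact: HN1].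
Qed.

Lemma injective_eventually_neq (T : Type) (v : nat -> T) : injective v ->
  forall y, exists N, forall n, (N <= n)%N -> v n <> y.
Proof.
move=> vinj y; have [[m <-]|nohit] := pselect (exists m, v m = y).
  by exists m.+1 => n mn /vinj nm; rewrite nm ltnn in mn.
by exists 0%N => n _ vn; apply: nohit; exists n.
Qed.

Lemma halving_eventually_lt (R : archiRealFieldType) (g : nat -> R) :
  (forall n, g n.+1 <= g n / 2) ->
  forall eps, 0 < eps -> exists N, forall n, (N <= n)%N -> g n < eps.
Proof.
move=> g_half eps eps_gt0.
have g_geo n : g n <= geometric (g 0%N) 2^-1 n.
  elim: n => [|n IH]; first by rewrite /= expr0 mulr1.
  by rewrite /= exprSr mulrA; apply: le_trans (g_half n) (ler_wpM2r _ IH).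
have geo_half : `|2^-1 : R| < 1 by rewrite ger0_norm // invf_lt1 // ltr1n.
have [N _ HN] := (cvgr0Pnorm_lt _).1 (cvg_geometric (g 0%N) geo_half) _ eps_gt0.
by exists N => n /HN; apply: le_lt_trans (le_trans (g_geo n) (ler_norm _)).
Qed.

Section LiminfBounds.
Variable R : realType.
Local Open Scope ereal_scope.

Lemma limn_einf_ge (v : (\bar R)^nat) a m :
  (forall k, (m <= k)%N -> a <= v k) -> a <= limn_einf v.
Proof.
move=> lb; rewrite limn_einf_lim (cvg_lim _ (@cvg_einfs_sup _ v)) //.
have einfs_m : range (einfs v) (einfs v m) by exists m.
apply: le_trans (ereal_sup_ubound einfs_m).
by apply: le_ereal_inf_tmp => _ [k /= mk <-]; exact: lb.
Qed.

Lemma limn_einf_le (v : (\bar R)^nat) a m :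
  (forall k, (m <= k)%N -> v k <= a) -> limn_einf v <= a.
Proof.
move=> ub; rewrite limn_einf_lim (cvg_lim _ (@cvg_einfs_sup _ v)) //.
apply: ge_ereal_sup => _ [n _ <-]; apply: le_trans (ub (maxn n m) (leq_maxr _ _)).
by apply: ereal_inf_lbound; exists (maxn n m) => //=; exact: leq_maxl.
Qed.

End LiminfBounds.

Section QuasiPseudometric.
Variables (X : Type) (d : X -> X -> Rl).
Hypothesis qpm : quasi_pseudometric d.

Lemma qpm_ge0 x y : 0 <= d x y. Proof. by case: qpm. Qed.
Lemma qpm_xx x : d x x = 0. Proof. by case: qpm => _ []. Qed.
Lemma qpm_triangle x y z : d x z <= d x y + d y z. Proof. by case: qpm => _ []. Qed.

Lemma qconvP u x : qconv d u x <->
  forall eps, 0 < eps -> exists N, forall n, (N <= n)%N -> d x (u n) < eps.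
Proof.
rewrite /qconv (@cvgr0Pnorm_lt Rl (GRing.regular Rl)).
split=> near0 eps /near0.
  by move=> [N _ HN]; exists N => n /HN; rewrite /= ger0_norm ?qpm_ge0.
by move=> [N HN]; exists N => // n /HN; rewrite /= ger0_norm ?qpm_ge0.
Qed.

Definition cluster_point (u : nat -> X) (x : X) :=
  forall N eps, 0 < eps -> exists2 n, (N <= n)%N & d x (u n) < eps.

Lemma right_K_Cauchy_cluster_qconv u x :
  right_K_Cauchy d u -> cluster_point u x -> qconv d u x.
Proof.
move=> uC ux; apply/qconvP => eps eps_gt0.
have eps2_gt0 : 0 < eps / 2 by rewrite divr_gt0.
have [N HN] := uC _ eps2_gt0; exists N => p Np; have [q pq xq] := ux p _ eps2_gt0.
move: pq; rewrite leq_eqVlt => /orP[/eqP ->|pq].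
  by apply: lt_trans xq _; rewrite ltr_pdivrMr // ltr_pMr // ltr1n.
apply: le_lt_trans (qpm_triangle _ (u q) _) _; rewrite [eps]splitr ltrD //.
by rewrite -(subnKC (ltnW pq)); apply: HN => //; rewrite subn_gt0.
Qed.

Lemma right_K_Cauchy_eventually_neq u x : right_K_Cauchy d u -> ~ qconv d u x ->
  exists N, forall n, (N <= n)%N -> u n <> x.
Proof.
move=> uC /(contra_not (right_K_Cauchy_cluster_qconv uC)) nocluster.
apply: contrapT => often; apply: nocluster => N eps eps_gt0.
apply: contrapT => far; apply: often; exists N => n Nn unx; apply: far.
by exists n; rewrite // unx qpm_xx.
Qed.

Lemma Sset_refl phi x : Sset d phi x x.
Proof. by rewrite /Sset /= qpm_xx adde0. Qed.

Lemma Sset_trans phi x y z :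
  Sset d phi x y -> Sset d phi y z -> Sset d phi x z.
Proof.
rewrite /Sset /= => xy yz; apply: le_trans xy.
apply: le_trans (leeD2r _ yz); rewrite -addeA -EFinD.
by apply: leeD2l; rewrite lee_fin qpm_triangle.
Qed.


Section StableLimit.
Variables (phi : X -> \bar Rl) (c : Rl).
Hypothesis phi_ge : forall x, (c%:E <= phi x)%E.
Local Notation F x := (fine (phi x)).

Lemma phi_fineE x : phi x != +oo%E -> phi x = (F x)%:E.
Proof. by move: (phi_ge x); case: (phi x). Qed.

Lemma lee_phi x y : phi x != +oo%E -> phi y != +oo%E ->
  (phi x <= phi y)%E = (F x <= F y).
Proof. by move=> /phi_fineE {1}-> /phi_fineE {1}->. Qed.

Lemma SsetE x y : phi x != +oo%E ->
  Sset d phi x y <-> phi y != +oo%E /\ F y + d y x <= F x.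
Proof.
move=> /phi_fineE xE; rewrite /Sset /= xE; move: (phi_ge y).
case: (phi y) => [r| |] // _; last by split=> // -[].
by rewrite -EFinD lee_fin; split=> // -[].
Qed.

Definition Sinf x : Rl := inf [set F y | y in Sset d phi x].

Lemma has_inf_Sset x : phi x != +oo%E -> has_inf [set F y | y in Sset d phi x].
Proof.
move=> xfin; split; first by exists (F x), x => //; exact: Sset_refl.
exists c => _ [y /(SsetE _ xfin)[yfin _] <-].
by have := phi_ge y; rewrite phi_fineE.
Qed.

Lemma Sinf_le x y : phi x != +oo%E -> Sset d phi x y -> Sinf x <= F y.
Proof. by move=> xfin xy; apply: ge_inf; [exact: (has_inf_Sset xfin).2|exists y]. Qed.

Lemma Sinf_le_Sinf x y : phi x != +oo%E -> Sset d phi x y -> Sinf x <= Sinf y.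
Proof.
move=> xfin xy; have yfin := ((SsetE _ xfin).1 xy).1.
apply: lb_le_inf; first exact: (has_inf_Sset yfin).1.
by move=> _ [z yz <-]; apply: Sinf_le xfin (Sset_trans xy yz).
Qed.

Lemma Sinf_lt x y : phi x != +oo%E -> Sset d phi x y -> phi y <> phi x ->
  Sinf x < F x.
Proof.
move=> xfin xy yx; have [yfin le_yx] := (SsetE _ xfin).1 xy.
have Fyx : F y != F x.
  by apply/eqP => e; apply: yx; rewrite (phi_fineE xfin) (phi_fineE yfin) e.
apply: le_lt_trans (Sinf_le xfin xy) _; rewrite lt_neqAle Fyx /=.
by apply: le_trans le_yx; rewrite lerDl qpm_ge0.
Qed.

Lemma exists_halving_step x : phi x != +oo%E -> Sinf x < F x ->
  exists2 y, Sset d phi x y & F y < (F x + Sinf x) / 2.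
Proof.
move=> xfin gap_gt0.
have eps_gt0 : 0 < (F x - Sinf x) / 2 by rewrite divr_gt0 // subr_gt0.
have [_ [y xy <-]] := inf_adherent eps_gt0 (has_inf_Sset xfin).
by exists y => //; rewrite -/(Sinf x); lra.
Qed.

Section HalvingSequence.
Hypothesis lsc : nearly_lsc d phi.
Variable u : nat -> X.
Hypotheses (u0_fin : phi (u 0%N) != +oo%E)
  (u_Sset : forall n, Sset d phi (u n) (u n.+1))
  (u_halving : forall n, F (u n.+1) < (F (u n) + Sinf (u n)) / 2).
Local Notation gap n := (F (u n) - Sinf (u n)).

Lemma halving_fin n : phi (u n) != +oo%E.
Proof. by elim: n => // n IH; exact: ((SsetE _ IH).1 (u_Sset n)).1. Qed.

Lemma halving_Sset n k : Sset d phi (u n) (u (n + k)%N).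
Proof.
elim: k => [|k IH]; first by rewrite addn0; exact: Sset_refl.
by rewrite addnS; exact: Sset_trans IH (u_Sset _).
Qed.

Lemma halving_gap_half n : gap n.+1 <= gap n / 2.
Proof.
by have := Sinf_le_Sinf (halving_fin n) (u_Sset n); have := u_halving n; lra.
Qed.

Lemma halving_dist n k : d (u (n + k)%N) (u n) <= gap n.
Proof.
have [_] := (SsetE _ (halving_fin n)).1 (halving_Sset n k).
by have := Sinf_le (halving_fin n) (halving_Sset n k); lra.
Qed.

Lemma halving_right_K_Cauchy : right_K_Cauchy d u.
Proof.
move=> eps /(halving_eventually_lt halving_gap_half)[N HN].
by exists N => n k /HN gap_lt _; exact: le_lt_trans (halving_dist n k) gap_lt.
Qed.

Lemma halving_fine_le n k : F (u (n + k)%N) <= F (u n).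
Proof.
have [_] := (SsetE _ (halving_fin n)).1 (halving_Sset n k).
by apply: le_trans; rewrite lerDl qpm_ge0.
Qed.

Lemma halving_inj : injective u.
Proof.
have lt_neq m n : (m < n)%N -> u m <> u n.
  move=> mn umn; have := halving_fine_le m.+1 (n - m.+1).
  rewrite subnKC // -umn => Fm_le.
  have := Sinf_le (halving_fin m) (Sset_refl phi (u m)).
  by have := u_halving m; lra.
move=> m n umn; case: (ltngtP m n) => // mn.
  by case: (lt_neq _ _ mn umn).
by case: (lt_neq _ _ mn (esym umn)).
Qed.

Section Limit.
Variable z : X.
Hypothesis uz : qconv d u z.

Lemma halving_limit_le k : (phi z <= phi (u k))%E.
Proof.
apply: le_trans (lsc halving_inj uz) _; apply: (@limn_einf_le _ _ _ k) => j kj.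
by rewrite -(subnKC kj) lee_phi ?halving_fin // halving_fine_le.
Qed.

Lemma halving_limit_fin : phi z != +oo%E.
Proof.
apply: contraTneq (halving_limit_le 0%N) => ->.
by rewrite phi_fineE ?halving_fin // leNgt ltey.
Qed.

Lemma halving_limit_fine_le k : F z <= F (u k).
Proof. by rewrite -lee_phi ?halving_fin ?halving_limit_fin ?halving_limit_le. Qed.

Lemma halving_limit_Sset n : Sset d phi (u n) z.
Proof.
apply/(SsetE _ (halving_fin n)); split; first exact: halving_limit_fin.
apply/ler_addgt0Pr => eps eps_gt0; have [N HN] := (qconvP u z).1 uz eps eps_gt0.
have := HN (n + N)%N (leq_addl _ _); have := halving_limit_fine_le (n + N)%N.
have [_] := (SsetE _ (halving_fin n)).1 (halving_Sset n N).
by have := qpm_triangle z (u (n + N)%N) (u n); lra.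
Qed.

(* y also lies in S(u N), so
   phi z <= phi (u N.+1) < Sinf (u N) + gap N / 2 <= phi y + gap N / 2. *)
Lemma halving_limit_stable y : Sset d phi z y -> phi y = phi z.
Proof.
move=> zy; have [yfin le_yz] := (SsetE _ halving_limit_fin).1 zy.
rewrite (phi_fineE yfin) (phi_fineE halving_limit_fin); congr EFin.
apply: le_anti; apply/andP; split.
  by apply: le_trans le_yz; rewrite lerDl qpm_ge0.
apply/ler_addgt0Pr => eps eps_gt0.
have [N HN] := halving_eventually_lt halving_gap_half eps_gt0.
have := Sinf_le (halving_fin N) (Sset_trans (halving_limit_Sset N) zy).
have := halving_limit_fine_le N.+1.
by have := HN N (leqnn N); have := u_halving N; lra.
Qed.

End Limit.
End HalvingSequence.
End StableLimit.

Lemma complete_cond2 : seq_right_K_complete d -> cond2 d.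
Proof.
move=> complete phi [[x0 x0fin] [[c phi_ge] lsc]]; apply: contrapT => no_stable.
have unstable x : exists2 y, Sset d phi x y & phi y <> phi x.
  apply: contrapT => H; apply: no_stable; exists x => y xy.
  by apply: contrapT => yx; apply: H; exists y.
have step_ex x : exists y, Sset d phi x y /\ (phi x != +oo%E ->
    fine (phi y) < (fine (phi x) + Sinf phi x) / 2).
  have [xfin|] := pselect (phi x != +oo%E); last first.
    by exists x; split=> //; exact: Sset_refl.
  have [y xy yx] := unstable x.
  by have [t] := exists_halving_step phi_ge xfin (Sinf_lt phi_ge xfin xy yx); exists t.
have [step stepP] := choice step_ex; pose u n := iter n step x0.
have u_Sset n : Sset d phi (u n) (u n.+1) := (stepP (u n)).1.
have u_halving n : fine (phi (u n.+1)) < (fine (phi (u n)) + Sinf phi (u n)) / 2.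
  exact: (stepP (u n)).2 (halving_fin phi_ge x0fin u_Sset n).
have [z uz] := complete u (halving_right_K_Cauchy phi_ge x0fin u_Sset u_halving).
apply: no_stable; exists z => y.
exact: (@halving_limit_stable phi c phi_ge lsc u x0fin u_Sset u_halving z uz y).
Qed.

Lemma fast_injective_subsequence u : right_K_Cauchy d u -> (forall x, ~ qconv d u x) ->
  exists w : nat -> X, [/\ injective w, forall n, d (w n.+1) (w n) < 2 ^- n.+1
                        & forall x, ~ cluster_point w x].
Proof.
move=> uC no_lim.
(* [Nc n] is a Cauchy modulus for 2^-(n+1); beyond [G j], u avoids every u i, i < j. *)
have step_gt0 n : 0 < 2 ^- n.+1 :> Rl by rewrite invr_gt0 exprn_gt0.
have [Nc HNc] := choice (fun n => uC _ (step_gt0 n)).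
have avoid y := right_K_Cauchy_eventually_neq uC (no_lim y).
have [G HG] := choice (eventually_avoid_finite u avoid).
pose B n p := maxn (Nc n.+1) (G p.+1); pose sigma := subseq_idx (Nc 0%N) B.
have sigma_Nc n : (Nc n <= sigma n)%N.
  by case: n => // n; exact: leq_trans (leq_maxl _ _) (subseq_idx_bound _ B n).
have sigma_G n : (G (sigma n).+1 <= sigma n.+1)%N.
  exact: leq_trans (leq_maxr _ _) (subseq_idx_bound _ B n).
exists (u \o sigma); split => [m n /= umn|n /=|x wx].
- suff lt_neq i j : (i < j)%N -> u (sigma j) <> u (sigma i).
    case: (ltngtP m n) => // mn; first by case: (lt_neq _ _ mn (esym umn)).
    by case: (lt_neq _ _ mn umn).
  case: j => // j ij; apply: HG (sigma_G j) _ _; rewrite ltnS.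
  exact: (subseq_idx_leq _ B).
- have sigma_ltS : (sigma n < sigma n.+1)%N := subseq_idx_ltS _ B n.
  rewrite -(subnKC (ltnW sigma_ltS)); apply: HNc (sigma_Nc n) _.
  by rewrite subn_gt0.
- apply: (no_lim x); apply: right_K_Cauchy_cluster_qconv uC _ => N eps eps_gt0.
  have [n Nn xw] := wx N eps eps_gt0.
  by exists (sigma n) => //; exact: leq_trans Nn (subseq_idx_ge _ B n).
Qed.

Definition dyadic_potential (w : nat -> X) (y : X) : \bar Rl :=
  ereal_inf [set (2 ^- n)%:E | n in [set n | w n = y]].

Section DyadicPotential.
Variable w : nat -> X.
Hypotheses (w_inj : injective w) (w_step : forall n, d (w n.+1) (w n) < 2 ^- n.+1)
  (w_no_cluster : forall x, ~ cluster_point w x).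
Local Notation phi := (dyadic_potential w).

Lemma dyadic_potential_at n : phi (w n) = (2 ^- n)%:E.
Proof.
rewrite /dyadic_potential (_ : [set _ | _ in _] = [set (2 ^- n)%:E]) ?ereal_inf1 //.
by apply/seteqP; split => [_ [m /= /w_inj -> <-] //|_ ->]; exists n.
Qed.

Lemma dyadic_potential_off y : (forall n, w n <> y) -> phi y = +oo%E.
Proof.
move=> off; rewrite /dyadic_potential (_ : [set _ | _ in _] = set0) ?ereal_inf0 //.
by apply/seteqP; split => // t [m wm _]; exact: off wm.
Qed.

Lemma dyadic_potential_nearly_lsc : nearly_lsc d phi.
Proof.
(* Either v eventually leaves the range of w, or it meets w at arbitrarily late
   indices (v being injective), which makes x a cluster point of w. *)
move=> v x v_inj vx.
have [[M HM]|often] := pselect (exists M, forall m, (M <= m)%N -> forall n, w n <> v m).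
  apply: le_trans (leey _) (limn_einf_ge (m := M) _) => k /HM off.
  by rewrite dyadic_potential_off.
exfalso; apply: (@w_no_cluster x) => N eps eps_gt0.
have [M1 HM1] := (qconvP v x).1 vx eps eps_gt0.
have [M2 HM2] := eventually_avoid_finite w (injective_eventually_neq v_inj) N.
apply: contrapT => far; apply: often; exists (maxn M1 M2) => m.
rewrite geq_max => /andP[m1 m2] n wn; apply: far; exists n; last by rewrite wn HM1.
by rewrite leqNgt; apply/negP => nN; exact: HM2 m m2 n nN (esym wn).
Qed.

Lemma dyadic_potential_admissible : admissible d phi.
Proof.
split; [|split]; first by exists (w 0%N); rewrite dyadic_potential_at.
  exists 0 => y; apply: le_ereal_inf_tmp => _ [n _ <-].
  by rewrite lee_fin invr_ge0 exprn_ge0.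
exact: dyadic_potential_nearly_lsc.
Qed.

Lemma dyadic_potential_descent y : exists t, Sset d phi y t /\ (phi t < phi y)%E.
Proof.
have half_lt n : (2 ^- n.+1 < 2 ^- n :> Rl).
  by rewrite exprSr invfM gtr_pMr ?invf_lt1 ?ltr1n // invr_gt0 exprn_gt0.
have [[n <-]|off] := pselect (exists n, w n = y).
  exists (w n.+1); rewrite /Sset /= !dyadic_potential_at -EFinD lte_fin lee_fin.
  split; last exact: half_lt.
  by rewrite [X in _ <= X](splitr (2 ^- n)) -invfM -exprSr lerD2l ltW.
have {}off n : w n <> y by move=> wn; apply: off; exists n.
exists (w 0%N); rewrite /Sset /= (dyadic_potential_off off) dyadic_potential_at.
by split; [exact: leey | exact: ltey].
Qed.

End DyadicPotential.

Lemma not_complete_descent : ~ seq_right_K_complete d ->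
  exists phi (T : X -> X), [/\ admissible d phi,
    forall y, Sset d phi y (T y) & forall y, (phi (T y) < phi y)%E].
Proof.
move=> incomplete.
have [u [uC no_lim]] : exists u, right_K_Cauchy d u /\ forall x, ~ qconv d u x.
  apply: contrapT => H; apply: incomplete => u uC; apply: contrapT => nolim.
  by apply: H; exists u; split => // x ux; apply: nolim; exists x.
have [w [w_inj w_step w_no_cluster]] := fast_injective_subsequence uC no_lim.
have [T TP] := choice (dyadic_potential_descent w_inj w_step).
exists (dyadic_potential w), T; split=> [|y|y]; last by case: (TP y).
  exact: dyadic_potential_admissible.
by case: (TP y).
Qed.

Lemma cond2_complete : cond2 d -> seq_right_K_complete d.
Proof.
move=> c2; apply: contrapT => /not_complete_descent[phi [T [adm TS Tlt]]].
have [z zstable] := c2 phi adm.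
by move: (Tlt z); rewrite (zstable _ (TS z)) ltxx.
Qed.

Lemma cond3_complete : cond3 d -> seq_right_K_complete d.
Proof.
move=> c3; apply: contrapT => /not_complete_descent[phi [T [adm TS Tlt]]].
have [z zmin] := c3 phi adm (fun x _ => ex_intro2 _ _ (T x) (TS x) (Tlt x)).
by move: (Tlt z); rewrite ltNge zmin.
Qed.

Lemma cond4_complete : cond4 d -> seq_right_K_complete d.
Proof.
move=> c4; apply: contrapT => /not_complete_descent[phi [T [adm TS Tlt]]].
have [z Tz] := c4 phi adm T TS.
by move: (Tlt z); rewrite Tz ltxx.
Qed.

End QuasiPseudometric.

Lemma cond2_cond3 (X : Type) (d : X -> X -> Rl) : cond2 d -> cond3 d.
Proof.
move=> c2 phi adm descent; have [z zstable] := c2 phi adm; exists z => x.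
have [zinf|] := leP (phi z) (ereal_inf (range phi)).
  by apply: le_trans zinf _; apply: ereal_inf_lbound; exists x.
by move=> /descent[y /zstable ->]; rewrite ltxx.
Qed.

Lemma cond2_cond4 (X : Type) (d : X -> X -> Rl) : cond2 d -> cond4 d.
Proof.
by move=> c2 phi adm T TS; have [z zstable] := c2 phi adm; exists z; exact: zstable.
Qed.

Theorem theorem3p9 (X : Type) (d : X -> X -> Rl) :
  quasi_pseudometric d ->
  (seq_right_K_complete d <-> cond2 d) /\
  (seq_right_K_complete d <-> cond3 d) /\
  (seq_right_K_complete d <-> cond4 d).
Proof.
move=> qpm; have c2 := complete_cond2 qpm.
split; [|split]; split.
- exact: c2.
- exact: cond2_complete.
- by move/c2; exact: cond2_cond3.
- exact: cond3_complete.
- by move/c2; exact: cond2_cond4.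
- exact: cond4_complete.
Qed.
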